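(* Let $n\ge 1$ be an integer and let $P\in\mathbb Z_{\ge0}[X]$ be a polynomial of degree $n$ with non-negative integer coefficients and $P(0)>0$. Define $h(j)=P(j)$ for $j\ge0$ and $h(j)=0$ for $j<0$. Then $\operatorname{hdepth}(h)\le 2^{n+1}$.
   Context: For a nonzero function $h:\mathbb Z\to\mathbb Z_{\ge 0}$ with $h(j)=0$ for all sufficiently negative $j$, and integers $k\le d$, set $\beta_k^d(h)=\sum_{j\le k}(-1)^{k-j}\binom{d-j}{k-j}h(j)$, and $\operatorname{hdepth}(h)=\max\{d\in\mathbb Z:\ \beta_k^d(h)\ge 0\text{ for all integers }k\le d\}$. *)

From mathcomp Require Import all_boot all_order all_algebra.
Set Implicit Arguments. Unset Strict Implicit. Unset Printing Implicit Defensive.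
Import Order.TTheory GRing.Theory Num.Theory.
Local Open Scope ring_scope.

(* beta_k^d(h) = sum_{j <= k} (-1)^(k-j) C(d-j, k-j) h(j), for a function
   h : int -> int vanishing below lo (h j = 0 for j < lo).  The terms with
   j < lo vanish, so the sum is the finite sum over lo <= j <= k
   (empty, i.e. 0, when k < lo).  For lo <= j <= k <= d the integers d-j, k-j
   are nonnegative, so the binomial is the nat binomial 'C(|d-j|, |k-j|). *)
Definition beta_from (lo : int) (h : int -> int) (k d : int) : int :=
  if k < lo then 0 else
  \sum_(i < (`|k - lo|%N).+1)
     let j := lo + (i%:Z) in
     (-1) ^+ (`|k - j|%N) * ('C(`|d - j|%N, `|k - j|%N))%:Z * h j.

Definition hdepth_adm (lo : int) (h : int -> int) (d : int) : Prop :=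
  forall k : int, k <= d -> 0 <= beta_from lo h k d.

Definition is_hdepth (lo : int) (h : int -> int) (D : int) : Prop :=
  hdepth_adm lo h D /\ forall d : int, hdepth_adm lo h d -> d <= D.

Definition hpoly (P : {poly int}) (j : int) : int :=
  if 0 <= j then P.[j] else 0.

From mathcomp Require Import all_boot all_order all_algebra.
From mathcomp Require Import zify ring lra.
From Stdlib Require Import Classical Wf_nat.
Set Implicit Arguments. Unset Strict Implicit. Unset Printing Implicit Defensive.
Import Order.TTheory GRing.Theory Num.Theory.
Local Open Scope ring_scope.

(* Only the two inequalities beta_1^d(h) >= 0 and beta_2^d(h) >= 0 are used.
   For d >= 1 they read
     beta_1^d = h(1) - d h(0),
     beta_2^d = h(2) - (d-1) h(1) + C(d,2) h(0).
   Since P has nonnegative coefficients and degree n, comparing coefficients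
   gives P(2) - P(0) <= 2^n (P(1) - P(0)).  Writing a = P(0) > 0, N = 2^n >= 2
   and d = m + 1, an elementary estimate shows that beta_1^d >= 0 together
   with the comparison above forces beta_2^d < 0 as soon as m >= 2N.  Hence
   every admissible d satisfies d <= 2N = 2^(n+1).  Finally d = -1 is
   admissible (all beta_k^d with k < 0 vanish), and a nonempty set of
   integers bounded above has a largest element, which is hdepth(h). *)

Lemma beta_one (h : int -> int) (m : nat) :
  beta_from 0 h 1 m%:Z = h 1 - m%:Z * h 0.
Proof.
rewrite /beta_from /= !big_ord_recr big_ord0 /=.
rewrite !addn0 !add0r subnn bin0 bin1 expr0 expr1; ring.
Qed.

Lemma beta_two (h : int -> int) (m : nat) :
  beta_from 0 h 2 m.+1%:Z = h 2 - m%:Z * h 1 + 'C(m.+1, 2)%:Z * h 0.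
Proof.
rewrite /beta_from /= !big_ord_recr big_ord0 /=.
rewrite !addn0 !add0r !add1n subnn subn1 /= bin0 bin1 expr0 expr1 sqrrN.
rewrite expr1n subn1 /=; ring.
Qed.

(* For a polynomial of degree n with nonnegative coefficients, each
   coefficient of degree i >= 1 contributes 2^i <= 2^n times as much to
   P(2) as to P(1). *)
Lemma horner_two_le (n : nat) (P : {poly int}) :
  size P = n.+1 -> (forall i : nat, 0 <= P`_i) ->
  P.[2] - P.[0] <= 2 ^+ n * (P.[1] - P.[0]).
Proof.
move=> sizeP coef_ge0.
rewrite horner_coef0 !horner_coef sizeP !big_ord_recl !expr0 !mulr1.
under [X in _ <= _ * (_ + X - _)]eq_bigr do rewrite expr1n mulr1.
rewrite !(addrC P`_ord0) !addrK mulr_sumr; apply: ler_sum => i _.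
rewrite [X in _ <= X]mulrC ler_wpM2l // ler_eXn2l //; exact: ltn_ord.
Qed.

Lemma double_bin2 (m : nat) : (2 * 'C(m.+1, 2) = m.+1 * m)%N.
Proof. by elim: m => [|m IH] //; rewrite binS bin1 mulnDr IH; lia. Qed.

Lemma beta_two_lt0 (a p1 p2 N : int) (m : nat) :
  0 < a -> 2 <= N -> 2 * N <= m%:Z ->
  m.+1%:Z * a <= p1 -> p2 - a <= N * (p1 - a) ->
  p2 - m%:Z * p1 + 'C(m.+1, 2)%:Z * a < 0.
Proof.
move=> a_gt0 N_ge2 m_ge beta1_ge0 p2_le.
have binE : 2 * 'C(m.+1, 2)%:Z = m.+1%:Z * m%:Z by have := double_bin2 m; lia.
(* After substituting the bound on p2, 2 beta_2 is at most minus a positive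
   combination of the following quantities, the last of which is positive. *)
have excess_ge0 : 0 <= (m%:Z - N) * (p1 - m.+1%:Z * a).
  by apply: mulr_ge0; lia.
have large_m_ge0 : 0 <= m%:Z * (a * (m%:Z - 2 * N)).
  by apply: mulr_ge0; [lia | apply: mulr_ge0; lia].
have a_term_gt0 : 0 < a * (N - 1) by apply: mulr_gt0; lia.
nia.
Qed.

Lemma hdepth_adm_le (n : nat) (P : {poly int}) (d : int) :
  (1 <= n)%N -> size P = n.+1 -> (forall i : nat, 0 <= P`_i) -> 0 < P.[0] ->
  hdepth_adm 0 (hpoly P) d -> d <= 2 ^+ n.+1.
Proof.
move=> n_ge1 sizeP coef_ge0 P0_gt0 adm_d.
have N_ge2 : 2 <= 2 ^+ n :> int by rewrite -[X in X <= _]expr1 ler_eXn2l.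
rewrite exprS leNgt; apply/negP => d_gt.
have [m d_eq] : exists m : nat, d = m.+1%:Z by exists `|d - 1|%N; lia.
rewrite {}d_eq in adm_d d_gt.
have beta1_ge0 := adm_d 1 ltac:(lia).
have beta2_ge0 := adm_d 2 ltac:(lia).
rewrite beta_one /hpoly /= subr_ge0 in beta1_ge0.
rewrite beta_two /hpoly /= in beta2_ge0.
have m_ge : 2 * 2 ^+ n <= m%:Z by lia.
have := beta_two_lt0 P0_gt0 N_ge2 m_ge beta1_ge0 (horner_two_le sizeP coef_ge0).
by rewrite ltNge beta2_ge0.
Qed.

(* A nonempty set of integers that is bounded above has a largest element;
   classically, take the least distance to the upper bound. *)
Lemma int_has_max (A : int -> Prop) (m B : int) :
  A m -> (forall d, A d -> d <= B) ->
  exists D, A D /\ forall d, A d -> d <= D.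
Proof.
move=> Am ub.
pose gap (k : nat) := A (B - k%:Z).
have gap_of d : A d -> gap `|B - d|%N.
  by move=> Ad; have d_le := ub d Ad; rewrite /gap (_ : B - _ = d) //; lia.
have [k [[gap_k k_min] _]] := dec_inh_nat_subset_has_unique_least_element
  gap (fun k => classic (gap k)) (ex_intro _ _ (gap_of m Am)).
exists (B - k%:Z); split => // d Ad.
have := k_min _ (gap_of d Ad); have := ub d Ad; lia.
Qed.

Lemma hdepth_adm_neg1 (h : int -> int) : hdepth_adm 0 h (-1).
Proof. by move=> k k_le; rewrite /beta_from ifT //; lia. Qed.

Theorem theorem3p1 (n : nat) (P : {poly int}) :
  (1 <= n)%N ->
  size P = n.+1 ->
  (forall i : nat, 0 <= P`_i) ->
  0 < P.[0] ->
  exists D : int, is_hdepth 0 (hpoly P) D /\ D <= 2 ^+ n.+1.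
Proof.
move=> n_ge1 sizeP coef_ge0 P0_gt0.
have adm_le d := @hdepth_adm_le n P d n_ge1 sizeP coef_ge0 P0_gt0.
have [D [adm_D D_max]] := int_has_max (hdepth_adm_neg1 (hpoly P)) adm_le.
by exists D; split; [split | apply: adm_le].
Qed.
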